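(* Let $0<\mu<L_{\max}^{-1}$ with $L_{\max}=\max_i\|A_i\|_2^2$, and let $\{x^n\}$ be generated by GAITA (as in the context) from an arbitrary $x^0\in\mathbf{R}^N$. Then $\{x^n\}$ has a convergent subsequence. Moreover, the set $\mathcal{L}$ of limit points of $\{x^n\}$ is closed and connected.
   Context: Let $A\in\mathbf{R}^{m\times N}$ have columns $A_1,\dots,A_N$, $y\in\mathbf{R}^m$, $\lambda>0$, $q\in(0,1)$, and $T_\lambda(x)=\frac12\|Ax-y\|_2^2+\lambda\sum_{i=1}^N|x_i|^q$. For a step size $\mu>0$ set $\tau_{\mu,q}=\frac{2-q}{2-2q}(2\lambda\mu(1-q))^{\frac{1}{2-q}}$ and $\eta_{\mu,q}=(2\lambda\mu(1-q))^{\frac{1}{2-q}}$. For $z\in\mathbf{R}$ let $prox_{\mu,\lambda|\cdot|^q}(z)=\arg\min_{v\in\mathbf{R}}\{\frac{(z-v)^2}{2\mu}+\lambda|v|^q\}$ (a single point when $|z|\neq\tau_{\mu,q}$). Define $\mathcal{T}(z,w)$ as the unique element of $prox_{\mu,\lambda|\cdot|^q}(z)$ if $|z|\neq\tau_{\mu,q}$, and, if $|z|=\tau_{\mu,q}$, as $sgn(z)\eta_{\mu,q}$ when $w\neq0$ and $0$ when $w=0$ ($sgn(0)=0$). GAITA: given $x^0\in\mathbf{R}^N$, for $n=0,1,2,\dots$ let $i=(n\bmod N)+1$, $z_i^n=x_i^n-\mu A_i^T(Ax^n-y)$, $x_i^{n+1}=\mathcal{T}(z_i^n,x_i^n)$,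 $x_j^{n+1}=x_j^n$ for $j\neq i$. *)

From HB Require Import structures.
From mathcomp Require Import all_boot all_order all_algebra.
From mathcomp Require Import all_classical all_reals all_analysis.
Set Implicit Arguments. Unset Strict Implicit. Unset Printing Implicit Defensive.
Import Order.TTheory GRing.Theory Num.Theory.
Import numFieldNormedType.Exports.
Local Open Scope ring_scope.
Local Open Scope classical_set_scope.

Section GAITA.
Variable R : realType.

Definition col_sqnorm m N (A : 'M[R]_(m, N)) (i : 'I_N) : R :=
  \sum_(k < m) (A k i) ^+ 2.

Definition Lmax m N (A : 'M[R]_(m, N)) : R :=
  \big[Num.max/0]_(i < N) col_sqnorm A i.

(* the scalar penalty |v|^q (powR, with 0 `^ q = 0 for q <> 0) *)
Definition penal (q v : R) : R := `|v| `^ q.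

Definition prox (mu lam q z : R) : set R :=
  [set v | forall w : R,
     (z - v) ^+ 2 / (2 * mu) + lam * penal q v
       <= (z - w) ^+ 2 / (2 * mu) + lam * penal q w].

Definition tau (mu lam q : R) : R :=
  (2 - q) / (2 - 2 * q) * (2 * lam * mu * (1 - q)) `^ (1 / (2 - q)).

Definition eta (mu lam q : R) : R :=
  (2 * lam * mu * (1 - q)) `^ (1 / (2 - q)).

(* v = T(z, w): the unique prox point if |z| <> tau; the tie-breaking
   rule otherwise. *)
Definition Tmap_rel (mu lam q z w v : R) : Prop :=
  (`|z| != tau mu lam q -> prox mu lam q z v) /\
  (`|z| = tau mu lam q ->
     v = if w != 0 then Num.sg z * eta mu lam q else 0).

Definition zcoord m N (A : 'M[R]_(m, N)) (y : 'cV[R]_m) (mu : R)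
  (x : 'cV[R]_N) (i : 'I_N) : R :=
  x i 0 - mu * \sum_(k < m) A k i * ((A *m x) k 0 - y k 0).

(* x is a GAITA sequence: at step n the coordinate i = n mod N (0-based)
   is updated, all other coordinates are kept. *)
Definition is_GAITA m N (A : 'M[R]_(m, N)) (y : 'cV[R]_m) (lam q mu : R)
  (x : nat -> 'cV[R]_N) : Prop :=
  forall (n : nat) (j : 'I_N),
    (((j : nat) = n %% N)%N ->
        Tmap_rel mu lam q (zcoord A y mu (x n) j) (x n j 0) (x n.+1 j 0)) /\
    (((j : nat) <> n %% N)%N -> x n.+1 j 0 = x n j 0).

Definition limit_points N (x : nat -> 'cV[R]_N) : set 'cV[R]_N :=
  [set p : 'cV[R]_N | exists phi : nat -> nat, (forall n, (phi n < phi n.+1)%N) /\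
                                    (x \o phi) @ \oo --> p].

End GAITA.

From Pilot Require Import Defs.
From HB Require Import structures.
From mathcomp Require Import all_boot all_order all_algebra.
From mathcomp Require Import all_classical all_reals all_analysis.
From mathcomp Require Import ring lra.
Set Implicit Arguments.
Unset Strict Implicit.
Unset Printing Implicit Defensive.
Import Order.TTheory GRing.Theory Num.Theory.
Import numFieldNormedType.Exports.
Local Open Scope ring_scope.
Local Open Scope classical_set_scope.

(* Each GAITA step minimises the prox objective exactly in one coordinate (on the
   tie [|z| = tau] both tie-breaking values [0] and [sgn z * eta] are minimisers),
   so the usual one-coordinate descent estimate gives
   [T(x^(n+1)) + (1/(2 mu) - L_max/2) |x^(n+1) - x^n|^2 <= T(x^n)].
   Hence [T(x^n)] decreases, which bounds the iterates through the penalty term,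
   and the squared steps are summable, so [x^(n+1) - x^n -> 0].  The iterates then
   stay in a compact box, so they have cluster points and their cluster set is
   closed; it is connected because a sequence with vanishing steps cannot keep
   jumping across the positive gap between two disjoint compact pieces of it. *)

Lemma bernoulli_powR_le0 {R : realType} (u p : R) :
  0 < u -> p <= 0 -> 1 + p * (u - 1) <= u `^ p.
Proof.
move=> u_gt0 p_le0.
have -> : u `^ p = expR (p * ln u) by rewrite /powR gt_eqF.
have ln_le : ln u <= u - 1.
  by have := expR_ge1Dx (ln u); rewrite lnK ?posrE //; lra.
have := expR_ge1Dx (p * ln u).
have : p * (u - 1) <= p * ln u by rewrite ler_wnM2l.
lra.
Qed.

Section prox_tie.
Variables (R : realType) (lam q mu : R).
Hypotheses (lam_gt0 : 0 < lam) (q_gt0 : 0 < q) (q_lt1 : q < 1) (mu_gt0 : 0 < mu).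

(* Side goals produced by [field] live in the bare field structure; reverting
   [q_lt1] gives [lra] an order fact from which to recover the real field. *)

Local Notation c := (2 * lam * mu * (1 - q)).
Local Notation et := (Defs.eta mu lam q).

Let c_gt0 : 0 < c.
Proof. by rewrite !mulr_gt0 // subr_gt0. Qed.

Lemma eta_gt0 : 0 < et.
Proof. exact: powR_gt0. Qed.

(* [eta] minimises [s |-> s / 2 + lam mu s^(q-1)] on [s > 0], with minimum [tau]. *)
Lemma eta_critical : lam * mu * et `^ (q - 1) = et / (2 * (1 - q)).
Proof.
have et_pow : et `^ (2 - q) = c.
  rewrite /Defs.eta -powRrM (_ : 1 / (2 - q) * (2 - q) = 1).
    exact/powRr1/ltW.
  by field; move: q_lt1; lra.
have et_c : et `^ (q - 1) * c = et.
  rewrite -et_pow -powRD; last by rewrite (gt_eqF eta_gt0) implybT.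
  by rewrite (_ : q - 1 + (2 - q) = 1) ?powRr1 ?(ltW eta_gt0) //; lra.
have c_neq0 : c != 0 by rewrite gt_eqF.
by rewrite -{2}et_c; field; move: q_lt1; lra.
Qed.

Lemma tauE : tau mu lam q = (2 - q) / (2 - 2 * q) * et.
Proof. by []. Qed.

Lemma tau_le_quad_powR (s : R) :
  0 < s -> tau mu lam q <= s / 2 + lam * mu * s `^ (q - 1).
Proof.
move=> s_gt0; have et_gt0 := eta_gt0.
have -> : s `^ (q - 1) = et `^ (q - 1) * (s / et) `^ (q - 1).
  by rewrite -powRM ?divr_ge0 ?ltW // mulrC divfK // gt_eqF.
have K_gt0 : 0 < et / (2 * (1 - q)) by rewrite divr_gt0 // mulr_gt0 // subr_gt0.
have q1_le0 : q - 1 <= 0 by rewrite subr_le0 ltW.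
have := ler_wpM2l (ltW K_gt0) (bernoulli_powR_le0 (divr_gt0 s_gt0 et_gt0) q1_le0).
rewrite mulrA eta_critical tauE.
have -> : et / (2 * (1 - q)) * (1 + (q - 1) * (s / et - 1)) =
          (2 - q) / (2 - 2 * q) * et - s / 2.
  by field; rewrite gt_eqF //; move: q_lt1; lra.
lra.
Qed.

Lemma tau_eq_quad_powR : et / 2 + lam * mu * et `^ (q - 1) = tau mu lam q.
Proof. by rewrite eta_critical tauE; field; move: q_lt1; lra. Qed.

Lemma penal0 : penal q 0 = 0.
Proof. by rewrite /penal normr0 powR0 // gt_eqF. Qed.

Lemma penalE (w : R) : penal q w = `|w| * `|w| `^ (q - 1).
Proof. by rewrite /penal mulr_powRB1. Qed.

Lemma prox_tie0 (z : R) : `|z| = tau mu lam q -> prox mu lam q z 0.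
Proof.
move=> z_tau w; rewrite penal0 mulr0 addr0 subr0.
have [->|w_neq0] := eqVneq w 0; first by rewrite subr0 penal0 mulr0 addr0.
have w_gt0 : 0 < `|w| by rewrite normr_gt0.
have := tau_le_quad_powR w_gt0; rewrite penalE.
set P := `|w| `^ (q - 1) => tau_le.
have zw : z * w <= tau mu lam q * `|w| by rewrite -z_tau -normrM ler_norm.
have w2 : w ^+ 2 = `|w| ^+ 2 by rewrite real_normK // num_real.
have gap : 0 <= `|w| * (`|w| / 2 + lam * mu * P - tau mu lam q).
  by rewrite mulr_ge0 // subr_ge0.
have -> : (z - w) ^+ 2 / (2 * mu) + lam * (`|w| * P) =
   z ^+ 2 / (2 * mu) + (w ^+ 2 - 2 * (z * w) + 2 * mu * lam * (`|w| * P)) / (2 * mu).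
  by field; rewrite gt_eqF.
rewrite lerDl divr_ge0 ?mulr_ge0 ?(ltW mu_gt0) // w2; nra.
Qed.

Lemma prox_tie_eta (z : R) :
  `|z| = tau mu lam q -> prox mu lam q z (Num.sg z * et).
Proof.
move=> z_tau w; apply: le_trans _ (prox_tie0 z_tau w).
have et_gt0 := eta_gt0.
have z_neq0 : z != 0.
  rewrite -normr_gt0 z_tau tauE mulr_gt0 // divr_gt0 //; move: q_lt1; lra.
have norm_v : `|Num.sg z * et| = et by rewrite normrM normr_sg z_neq0 mul1r gtr0_norm.
have zv : z * (Num.sg z * et) = tau mu lam q * et.
  by rewrite mulrA (mulrC z) -normrEsg z_tau.
have v2 : (Num.sg z * et) ^+ 2 = et ^+ 2 by rewrite exprMn sqr_sg z_neq0 mul1r.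
have := tau_eq_quad_powR.
rewrite penalE norm_v penal0 mulr0 addr0 subr0.
move: zv v2; set v := Num.sg z * et; set E := et `^ (q - 1) => zv v2 tau_eq.
have -> : (z - v) ^+ 2 / (2 * mu) + lam * (et * E) =
    z ^+ 2 / (2 * mu) + (v ^+ 2 - 2 * (z * v)) / (2 * mu) + lam * (et * E).
  by field; rewrite gt_eqF.
rewrite v2 zv -tau_eq.
have -> : (et ^+ 2 - 2 * ((et / 2 + lam * mu * E) * et)) / (2 * mu) = - (lam * (et * E)).
  by field; rewrite gt_eqF.
by rewrite subrK.
Qed.

Lemma Tmap_rel_prox (z w v : R) : Tmap_rel mu lam q z w v -> prox mu lam q z v.
Proof.
move=> [off_tie on_tie].
have [z_tau|] := eqVneq `|z| (tau mu lam q); last exact: off_tie.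
by rewrite (on_tie z_tau); case: ifP => _; [exact: prox_tie_eta | exact: prox_tie0].
Qed.
End prox_tie.

Section coordinate_descent.
Variables (R : realType) (m N : nat) (A : 'M[R]_(m, N)) (y : 'cV[R]_m) (lam q : R).

Definition Tlam (x : 'cV[R]_N) : R :=
  (\sum_k ((A *m x) k 0 - y k 0) ^+ 2) / 2 + lam * \sum_j penal q (x j 0).

Lemma Tlam_ge0 (x : 'cV[R]_N) : 0 <= lam -> 0 <= Tlam x.
Proof.
move=> lam_ge0; rewrite addr_ge0 ?mulr_ge0 ?divr_ge0 ?sumr_ge0 // => *.
  exact: sqr_ge0.
exact: powR_ge0.
Qed.

Lemma penal_le_Tlam (x : 'cV[R]_N) (i : 'I_N) :
  0 <= lam -> lam * penal q (x i 0) <= Tlam x.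
Proof.
move=> lam_ge0; have powR_sum_ge0 : 0 <= \sum_(j | j != i) penal q (x j 0).
  by apply: sumr_ge0 => j _; exact: powR_ge0.
have res_ge0 : 0 <= (\sum_k ((A *m x) k 0 - y k 0) ^+ 2) / 2.
  by rewrite divr_ge0 // sumr_ge0 // => k _; exact: sqr_ge0.
rewrite /Tlam (bigD1 i) //= mulrDr; have := mulr_ge0 lam_ge0 powR_sum_ge0; lra.
Qed.

Lemma col_sqnorm_le_Lmax (i : 'I_N) : col_sqnorm A i <= Lmax A.
Proof. exact: (le_bigmax _ (col_sqnorm A)). Qed.

Lemma Tlam_update (x x' : 'cV[R]_N) (i : 'I_N) :
  (forall j, j != i -> x' j 0 = x j 0) ->
  let t := x' i 0 - x i 0 in
  Tlam x' = Tlam x + t * \sum_k A k i * ((A *m x) k 0 - y k 0)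
            + t ^+ 2 * col_sqnorm A i / 2 + lam * (penal q (x' i 0) - penal q (x i 0)).
Proof.
move=> off_i t.
have sum_upd (F : 'I_N -> R -> R) :
    \sum_j F j (x' j 0) = \sum_j F j (x j 0) - F i (x i 0) + F i (x' i 0).
  rewrite (bigD1 i) //= [in RHS](bigD1 i) //= (eq_bigr (fun j => F j (x j 0))).
    by ring.
  by move=> j /off_i ->.
have res_upd k : (A *m x') k 0 - y k 0 = (A *m x) k 0 - y k 0 + A k i * t.
  by rewrite !mxE (sum_upd (fun j v => A k j * v)) /t; ring.
rewrite /Tlam (sum_upd (fun=> penal q)).
under eq_bigr do rewrite res_upd sqrrD exprMn.
rewrite !big_split /=.
have cross : \sum_k ((A *m x) k 0 - y k 0) * (A k i * t) =
    t * \sum_k A k i * ((A *m x) k 0 - y k 0).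
  by rewrite mulr_sumr; apply: eq_bigr => k _; ring.
have quad : \sum_k A k i ^+ 2 * t ^+ 2 = t ^+ 2 * col_sqnorm A i.
  by rewrite mulr_sumr; apply: eq_bigr => k _; ring.
by rewrite cross quad; field.
Qed.

Lemma Tlam_prox_descent (mu : R) (x x' : 'cV[R]_N) (i : 'I_N) : 0 < mu ->
  (forall j, j != i -> x' j 0 = x j 0) ->
  prox mu lam q (zcoord A y mu x i) (x' i 0) ->
  Tlam x' + (1 / (2 * mu) - Lmax A / 2) * (x' i 0 - x i 0) ^+ 2 <= Tlam x.
Proof.
move=> mu_gt0 off_i x'_prox; rewrite (Tlam_update off_i) /=.
set t := x' i 0 - x i 0; set g := \sum_k _.
have := x'_prox (x i 0); rewrite /zcoord -/g.
have -> : (x i 0 - mu * g - x' i 0) ^+ 2 / (2 * mu) =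
    (x i 0 - mu * g - x i 0) ^+ 2 / (2 * mu) + t ^+ 2 / (2 * mu) + t * g.
  by rewrite /t; field; rewrite gt_eqF.
have := ler_wpM2l (sqr_ge0 t) (col_sqnorm_le_Lmax i).
have -> : (1 / (2 * mu) - Lmax A / 2) * t ^+ 2 = t ^+ 2 / (2 * mu) - t ^+ 2 * Lmax A / 2.
  by field; rewrite gt_eqF.
lra.
Qed.
End coordinate_descent.

Lemma descent_cvg0 {R : realType} (f s : R ^nat) :
  (forall n, 0 <= f n) -> (forall n, 0 <= s n) -> (forall n, f n.+1 + s n <= f n) ->
  s @ \oo --> 0.
Proof.
move=> f_ge0 s_ge0 f_descent; apply: cvg_series_cvg_0.
have series_le n : series s n <= f 0%N - f n.
  elim: n => [|n IHn]; first by rewrite /series /= big_geq // subrr.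
  rewrite /series /= big_nat_recr //=; rewrite /series /= in IHn.
  by have := f_descent n; lra.
apply: nondecreasing_is_cvgn; first exact: nondecreasing_series.
by exists (f 0%N) => _ [n _ <-]; have := series_le n; have := f_ge0 n; lra.
Qed.

Lemma sqr_norm_cvg0 {R : realType} {V : normedModType R} (u : V ^nat) :
  (fun n => `|u n| ^+ 2) @ \oo --> 0 -> u @ \oo --> 0.
Proof.
move=> /(continuous_cvg _ (@sqrt_continuous R 0)); rewrite sqrtr0.
have -> : Num.sqrt \o (fun n => `|u n| ^+ 2) = fun n => `|u n|.
  by apply/funext => n /=; rewrite sqrtr_sqr normr_id.
by move/norm_cvg0P.
Qed.

Lemma norm_cV_single {R : realType} {N : nat} (v : 'cV[R]_N) (i : 'I_N) :
  (forall j, j != i -> v j 0 = 0) -> `|v| = `|v i 0|.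
Proof.
move=> off_i; apply/eqP; rewrite eq_le; apply/andP; split.
  rewrite [leLHS]/Num.norm /= mx_normrE; apply: bigmax_le => // -[j k] _ /=.
  by rewrite (ord1 k); have [->|/off_i ->] := eqVneq j i; rewrite ?normr0.
rewrite [leRHS]/Num.norm /= mx_normrE.
exact: (le_bigmax _ (fun jk : 'I_N * 'I_1 => `|v jk.1 jk.2|) (i, 0)).
Qed.

Section gaita_iterates.
Variables (R : realType) (m N : nat) (A : 'M[R]_(m, N)) (y : 'cV[R]_m)
  (lam q mu : R) (x : nat -> 'cV[R]_N).
Hypotheses (lam_gt0 : 0 < lam) (q_gt0 : 0 < q) (q_lt1 : q < 1) (mu_gt0 : 0 < mu)
  (mu_Lmax : mu * Lmax A < 1) (x_gaita : is_GAITA A y lam q mu x).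

Local Notation T := (Tlam A y lam q).
Local Notation rate := (1 / (2 * mu) - Lmax A / 2).

Let rate_gt0 : 0 < rate.
Proof.
have -> : rate = (1 - mu * Lmax A) / (2 * mu) by field; rewrite gt_eqF.
by rewrite divr_gt0 ?mulr_gt0 // subr_gt0.
Qed.

Lemma gaita_descent n : T (x n.+1) + rate * `|x n.+1 - x n| ^+ 2 <= T (x n).
Proof.
have [N0|N_gt0] := posnP N.
  have -> : x n.+1 = x n by apply/matrixP => -[j j_lt]; exfalso; rewrite N0 in j_lt.
  by rewrite subrr normr0 expr0n mulr0 addr0.
pose i := Ordinal (ltn_pmod n N_gt0).
have off_i j : j != i -> x n.+1 j 0 = x n j 0.
  move=> j_neq_i; apply: (x_gaita n j).2 => j_eq.
  by move: j_neq_i; rewrite -val_eqE /= j_eq eqxx.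
have x_prox := Tmap_rel_prox lam_gt0 q_gt0 q_lt1 mu_gt0 ((x_gaita n i).1 erefl).
have := Tlam_prox_descent mu_gt0 off_i x_prox.
apply: le_trans; rewrite lerD2l ler_wpM2l ?(ltW rate_gt0) //.
rewrite (@norm_cV_single _ _ _ i); last by move=> j /off_i; rewrite !mxE => ->; rewrite subrr.
by rewrite !mxE real_normK ?num_real.
Qed.

Lemma gaita_Tlam_le n : T (x n) <= T (x 0%N).
Proof.
elim: n => // n; apply: le_trans; have := gaita_descent n.
by have := mulr_ge0 (ltW rate_gt0) (sqr_ge0 `|x n.+1 - x n|); lra.
Qed.

Lemma gaita_bounded n i j : `|x n i j| <= (T (x 0%N) / lam) `^ q^-1.
Proof.
rewrite (ord1 j).
have := le_trans (penal_le_Tlam A y q (x n) i (ltW lam_gt0)) (gaita_Tlam_le n).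
rewrite mulrC -ler_pdivlMr // /penal => pow_le.
rewrite -[leLHS](@powRr1 _ `|x n i 0|) // -(mulfV (lt0r_neq0 q_gt0)) powRrM.
rewrite ge0_ler_powR ?invr_ge0 ?(ltW q_gt0) // nnegrE ?powR_ge0 //.
exact: le_trans (powR_ge0 _ _) pow_le.
Qed.

Lemma gaita_step_cvg0 : (fun n => x n.+1 - x n) @ \oo --> (0 : 'cV[R]_N).
Proof.
apply: (@sqr_norm_cvg0 _ _ (fun n => x n.+1 - x n)).
apply: (@descent_cvg0 _ (fun n => T (x n) / rate)).
- by move=> n; rewrite divr_ge0 ?Tlam_ge0 ?ltW.
- by move=> n; exact: sqr_ge0.
- move=> n; rewrite -(ler_pM2r rate_gt0) mulrDl !divfK ?gt_eqF // mulrC.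
  exact: gaita_descent.
Qed.

End gaita_iterates.

Lemma nat_crossing (P : nat -> Prop) a k : P a -> ~ P (a + k)%N ->
  exists n, [/\ (a <= n)%N, P n & ~ P n.+1].
Proof.
move=> Pa; elim: k => [|k IHk]; first by rewrite addn0.
case: (pselect (P (a + k)%N)) => [Pak nPak1 | nPak _]; last exact: IHk.
by exists (a + k)%N; rewrite leq_addr -addnS.
Qed.

Section sequence_cluster_points.
Variables (R : realType) (V : normedModType R).
Implicit Types (x : V ^nat) (p : V) (K : set V).

Lemma cluster_seqP x p : cluster (x @ \oo) p <->
  forall e n, 0 < e -> exists2 k, (n <= k)%N & `|p - x k| <= e.
Proof.
split=> [px e n e_gt0|px A B [n _ nA] /nbhs_ballP[e e_gt0 peB]].
  have tail : (x @ \oo) [set x k | k in [set k | (n <= k)%N]].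
    by exists n => // k /= nk; exists k.
  have [_ [[k nk <-] /=]] := px _ _ tail (nbhsx_ballx p e e_gt0).
  by rewrite -ball_normE /= => /ltW; exists k.
have [k nk pxk] := px (e / 2) n (divr_gt0 e_gt0 (ltr0Sn _ 1)).
exists (x k); split; first exact: nA.
apply: peB; rewrite -ball_normE /=; apply: le_lt_trans pxk _.
by rewrite ltr_pdivrMr // ltr_pMr // ltr1n.
Qed.

Lemma cluster_seq_dist x p :
  cluster (x @ \oo) p <-> cluster ((fun n => `|p - x n|) @ \oo) 0.
Proof.
rewrite cluster_seqP cluster_eventuallyP.
split=> px e n /(px e n)[k nk pxk]; exists k => //.
  by rewrite sub0r normrN normr_id.
by rewrite sub0r normrN normr_id in pxk.
Qed.

Lemma cluster_subseqP x p : cluster (x @ \oo) p <->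
  exists phi : nat -> nat, (forall n, (phi n < phi n.+1)%N) /\ (x \o phi) @ \oo --> p.
Proof.
rewrite cluster_seq_dist cluster_eventually_cvg.
split=> [[phi phi_incr phi_cvg] | [phi [phi_incr phi_cvg]]]; exists phi.
- split; first exact: (increasing_seqP phi).2.
  apply/subr_cvg0/norm_cvg0P; under eq_fun do rewrite distrC; exact: phi_cvg.
- exact: (increasing_seqP phi).1.
have -> : (fun n => `|p - x n|) \o phi = fun n => `|x (phi n) - p|.
  by apply/funext => n; rewrite /= distrC.
exact/norm_cvg0P/subr_cvg0.
Qed.

Lemma closed_cluster_seq x : closed (cluster (x @ \oo)).
Proof. by rewrite clusterE; apply: closed_bigI => A _; exact: closed_closure. Qed.

Lemma compact_cluster_seq K x :
  compact K -> (forall n, K (x n)) -> K `&` cluster (x @ \oo) !=set0.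
Proof. by move=> cK xK; apply: cK; exists 0%N => // n _; exact: xK. Qed.

Lemma cluster_seq_sub K x : closed K -> (forall n, K (x n)) -> cluster (x @ \oo) `<=` K.
Proof.
move=> cK xK p; rewrite clusterE => Kp; apply/cK/Kp.
by exists 0%N => // n _; exact: xK.
Qed.

Lemma compact_closed_dist (B D : set V) : compact B -> closed D -> B `&` D = set0 ->
  exists2 d, 0 < d & forall u w, B u -> D w -> d <= `|u - w|.
Proof.
move=> cB cD BD0; apply: contrapT => no_dist.
have close_pair k : exists uw : V * V, [/\ B uw.1, D uw.2 & `|uw.1 - uw.2| < k.+1%:R^-1].
  apply: contrapT => no_pair; apply: no_dist; exists k.+1%:R^-1 => // u w Bu Dw.
  by rewrite leNgt; apply/negP => uw_lt; apply: no_pair; exists (u, w).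
have [uw uwP] := choice close_pair.
have Bu k : B (uw k).1 by have [] := uwP k.
have [p [Bp pc]] := compact_cluster_seq cB Bu.
suff Dp : D p by have : (B `&` D) p by [split]; rewrite BD0.
apply: cD => S /nbhs_ballP[e e_gt0 peS].
have e2_gt0 : 0 < e / 2 by rewrite divr_gt0.
have [K _ /= Kinv] := near_infty_natSinv_lt (PosNum e2_gt0).
have [k Kk pk] := (cluster_seqP _ _).1 pc (e / 2) K e2_gt0.
have [_ Dw uw_lt] := uwP k.
exists (uw k).2; split => //; apply: peS; rewrite -ball_normE /=.
apply: le_lt_trans (ler_distD (uw k).1 _ _) _.
by rewrite [e]splitr ler_ltD // (lt_trans uw_lt) // Kinv.
Qed.

Lemma compact_cluster_seq_near K x : compact K -> (forall n, K (x n)) ->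
  forall e, 0 < e -> \forall n \near \oo, exists2 a, cluster (x @ \oo) a & `|x n - a| < e.
Proof.
move=> cK xK e e_gt0; apply: contrapT => not_near.
have far N : exists n, (N <= n)%N /\ forall a, cluster (x @ \oo) a -> e <= `|x n - a|.
  apply: contrapT => no_far; apply: not_near; exists N => // n /= Nn.
  apply: contrapT => no_a; apply: no_far; exists n; split => // a a_cl.
  by rewrite leNgt; apply/negP => lt; apply: no_a; exists a.
have [f fP] := choice far.
have [q [_ qc]] := compact_cluster_seq cK (fun k => xK (f k)).
have q_cl : cluster (x @ \oo) q.
  apply/cluster_seqP => e' n e'_gt0; have [k nk qk] := (cluster_seqP _ _).1 qc e' n e'_gt0.
  by exists (f k) => //; apply: leq_trans nk (fP k).1.
have e2_gt0 : 0 < e / 2 by rewrite divr_gt0.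
have [k _ qk] := (cluster_seqP _ _).1 qc (e / 2) 0%N e2_gt0.
have := le_trans ((fP k).2 q q_cl); rewrite distrC => /(_ _ qk).
by rewrite ler_pdivlMr // ger_pMr //; lra.
Qed.

Lemma cluster_seq_gap K x (B D : set V) : compact K -> (forall n, K (x n)) ->
  (fun n => x n.+1 - x n) @ \oo --> 0 -> compact B -> closed D -> B `&` D = set0 ->
  cluster (x @ \oo) `<=` B `|` D -> B `&` cluster (x @ \oo) !=set0 ->
  D `&` cluster (x @ \oo) !=set0 -> False.
Proof.
move=> cK xK step0 cB cD BD0 LBD [b [Bb Lb]] [p [Dp Lp]].
have [d d_gt0 BD_far] := compact_closed_dist cB cD BD0.
have [e e_gt0 de] : exists2 e, 0 < e & d = 3 * e.
  by exists (d / 3); [rewrite divr_gt0 | field].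
have [N0 _ N0P] : \forall n \near \oo,
    `|x n.+1 - x n| < e /\ exists2 a, cluster (x @ \oo) a & `|x n - a| < e.
  apply: filterI; first exact: (cvgr0Pnorm_lt _).1 step0 _ e_gt0.
  exact: compact_cluster_seq_near cK xK _ e_gt0.
have [n1 N0n1 bn1] := (cluster_seqP _ _).1 Lb e N0 e_gt0.
have [n2 n1n2 pn2] := (cluster_seqP _ _).1 Lp e n1 e_gt0.
have far_n2 : ~ exists2 u, B u & `|u - x (n1 + (n2 - n1))%N| <= e.
  rewrite subnKC // => -[u Bu un2]; have := BD_far u p Bu Dp.
  by have := ler_distD (x n2) u p; rewrite (distrC (x n2) p); lra.
pose near_B n := exists2 u, B u & `|u - x n| <= e.
have [n [n1n [u Bu un] far_n1]] := @nat_crossing near_B _ _ (ex_intro2 _ _ b Bb bn1) far_n2.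
have [step_n _] := N0P n (leq_trans N0n1 n1n).
have [_ [a /LBD[Ba|Da] an1]] := N0P n.+1 (leq_trans N0n1 (leqW n1n)).
  by apply: far_n1; exists a; rewrite // distrC ltW.
have := BD_far u a Bu Da; have := ler_distD (x n) u a.
have := ler_distD (x n.+1) (x n) a; rewrite (distrC (x n) (x n.+1)); lra.
Qed.

Lemma connected_cluster_seq K x : compact K -> (forall n, K (x n)) ->
  (fun n => x n.+1 - x n) @ \oo --> 0 -> connected (cluster (x @ \oo)).
Proof.
move=> cK xK step0 B [b Bb] [U oU BLU] [C cC BLC].
apply/seteqP; split; first by rewrite BLU; exact: subIsetl.
move=> p Lp; apply: contrapT => nBp.
have LK : cluster (x @ \oo) `<=` K.
  by apply: cluster_seq_sub xK; exact: compact_closed cK.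
apply: (@cluster_seq_gap K x B (cluster (x @ \oo) `&` ~` U)) => //.
- apply: (subclosed_compact _ cK).
    by rewrite BLC; apply: closedI => //; exact: closed_cluster_seq.
  by rewrite BLU => u [/LK].
- by apply: closedI; [exact: closed_cluster_seq | exact: open_closedC].
- by rewrite BLU; apply/seteqP; split=> // u [[_ Uu] [_ /(_ Uu)]].
- move=> a La; have [Ua|nUa] := pselect (U a); [left; rewrite BLU | right]; by [].
- by exists b; split=> //; move: Bb; rewrite BLU => -[].
- by exists p; split=> //; split=> // Up; apply: nBp; rewrite BLU.
Qed.

End sequence_cluster_points.

Lemma limit_pointsE (R : realType) (N : nat) (x : nat -> 'cV[R]_N) :
  limit_points x = cluster (x @ \oo).
Proof. by apply/seteqP; split=> p /cluster_subseqP. Qed.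

Lemma trmx_continuous (R : realType) (m n : nat) : continuous (@trmx R m n).
Proof.
move=> v B /nbhs_ballP[e e_gt0 vB]; apply/nbhs_ballP; exists e => // w [_ vw].
by apply: vB; split=> // i j; rewrite !mxE; exact: vw.
Qed.

Lemma compact_cV_box (R : realType) (N : nat) (M : R) :
  compact [set v : 'cV[R]_N | forall i j, `|v i j| <= M].
Proof.
pose rbox := [set r : 'rV[R]_N | forall i, (fun=> `[- M, M]%classic) i (r ord0 i)].
have -> : [set v : 'cV[R]_N | forall i j, `|v i j| <= M] = trmx @` rbox.
  apply/seteqP; split=> [v vM | _ [r rM <-] i j].
    exists v^T; last exact: trmxK.
    by move=> i /=; rewrite in_itv /= mxE -ler_norml.
  by rewrite (ord1 j) mxE; have := rM i; rewrite /= in_itv /= -ler_norml.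
apply: continuous_compact; last by apply: rV_compact => _; exact: segment_compact.
exact/continuous_subspaceT/trmx_continuous.
Qed.

Theorem theorem1 (R : realType) (m N : nat) (A : 'M[R]_(m, N)) (y : 'cV[R]_m)
  (lam q mu : R) (x : nat -> 'cV[R]_N) :
  0 < lam -> 0 < q -> q < 1 ->
  0 < mu -> mu * Lmax A < 1 ->
  is_GAITA A y lam q mu x ->
  (exists phi : nat -> nat, (forall n, (phi n < phi n.+1)%N) /\
                            cvg ((x \o phi) @ \oo)) /\
  closed (limit_points x) /\ connected (limit_points x).
Proof.
move=> lam_gt0 q_gt0 q_lt1 mu_gt0 mu_Lmax x_gaita.
have xK := gaita_bounded lam_gt0 q_gt0 q_lt1 mu_gt0 mu_Lmax x_gaita.
have cK := @compact_cV_box R N ((Tlam A y lam q (x 0%N) / lam) `^ q^-1).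
rewrite limit_pointsE; split; last split.
- have [p [_ /cluster_subseqP[phi [phi_incr phi_cvg]]]] := compact_cluster_seq cK xK.
  by exists phi; split=> //; apply/cvg_ex; exists p.
- exact: closed_cluster_seq.
- apply: connected_cluster_seq cK xK _.
  exact: gaita_step_cvg0 lam_gt0 q_gt0 q_lt1 mu_gt0 mu_Lmax x_gaita.
Qed.
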